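(* Let $E_1,H_1,\dots,E_n,H_n$ be logically independent events, let $\mathcal F_k=\{E_1|H_1,\dots,E_k|H_k\}$, and let $(p_1,\dots,p_n)\in[0,1]^n$ be an assessment on $\mathcal F_n$. For each $k=2,\dots,n$, the set of coherent extensions $z$ of $(p_1,\dots,p_k)$ on $\mathcal F_k$ to the quasi conjunction $\mathcal C(\mathcal F_k)$ is the interval $[l_k,u_k]$ with $$l_k=T_L(p_1,\dots,p_k)=\max\Big(\sum_{i=1}^k p_i-(k-1),0\Big),$$ $$u_k=S_0^H(p_1,\dots,p_k)=\begin{cases}1,& p_i=1\text{ for some } i,\\[2pt] \dfrac{\sum_{i=1}^k\frac{p_i}{1-p_i}}{\sum_{i=1}^k\frac{p_i}{1-p_i}+1},& p_i<1\text{ for all } i.\end{cases}$$ *)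

From HB Require Import structures.
From mathcomp Require Import all_boot all_order all_algebra.
Set Implicit Arguments. Unset Strict Implicit. Unset Printing Implicit Defensive.
Import Order.TTheory GRing.Theory Num.Theory.
Local Open Scope ring_scope.

Definition ind (R : numDomainType) (b : bool) : R := (b : nat)%:R.

(* A family of m conditional events A j | B j on a finite space of
   constituents Omega, with assessment p j. *)
Definition coherent (R : realFieldType) (Omega : finType) (m : nat)
  (A B : 'I_m -> pred Omega) (p : 'I_m -> R) : Prop :=
  forall (J : {set 'I_m}) (s : 'I_m -> R), J != set0 ->
    exists w : Omega, [exists j in J, B j w] /\
      0 <= \sum_(j in J) s j * ind R (B j w) * (ind R (A j w) - p j).

Definition logically_independent (Omega : finType) (n : nat)
  (E H : nat -> pred Omega) : Prop :=
  forall a b : 'I_n -> bool, exists w : Omega,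
    forall i : 'I_n, E i w = a i /\ H i w = b i.

(* Quasi conjunction C(F_k) = (/\_{i<k} (E_i \/ ~H_i)) | (\/_{i<k} H_i). *)
Definition qc_cond (Omega : finType) (k : nat) (E H : nat -> pred Omega)
  : pred Omega := fun w => [forall i : 'I_k, E i w || ~~ H i w].
Definition qc_given (Omega : finType) (k : nat) (H : nat -> pred Omega)
  : pred Omega := fun w => [exists i : 'I_k, H i w].

(* The family F_k together with C(F_k), indexed by 'I_k.+1
   (index k is the quasi conjunction); assessment (p_0..p_{k-1}, z). *)
Definition extA (Omega : finType) (k : nat) (E H : nat -> pred Omega)
  (j : 'I_k.+1) : pred Omega :=
  if (j < k)%N then E j else qc_cond k E H.
Definition extB (Omega : finType) (k : nat) (H : nat -> pred Omega)
  (j : 'I_k.+1) : pred Omega :=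
  if (j < k)%N then H j else qc_given k H.
Definition extp (R : realFieldType) (k : nat) (p : nat -> R) (z : R)
  (j : 'I_k.+1) : R := if (j < k)%N then p j else z.

Definition TL (R : realFieldType) (k : nat) (p : nat -> R) : R :=
  Num.max (\sum_(i < k) p i - (k - 1)%:R) 0.

Definition SH0 (R : realFieldType) (k : nat) (p : nat -> R) : R :=
  if [exists i : 'I_k, p i == 1] then 1
  else (\sum_(i < k) p i / (1 - p i)) / (\sum_(i < k) p i / (1 - p i) + 1).

Arguments extA {Omega} k E H j _.
Arguments extB {Omega} k H j _.
Arguments extp {R} k p z j.
Arguments TL {R} k p.
Arguments SH0 {R} k p.
Arguments coherent {R Omega m} A B p.
Arguments logically_independent {Omega} n E H.

(* Logical independence realises every truth assignment (h, e) of the H_i and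
   E_i, so coherence is first restated over such profiles
   ([coherent_profileP]).  Necessity: explicit stakes with negative gain on
   every relevant profile rule out z outside [0,1] (+-1 on C(F_k)), below T_L
   (unit stakes on each E_i | H_i against C(F_k)) and above S_0^H (stakes
   -1/(1-p_i) against S+1 on C(F_k)).  Sufficiency: a nonnegative weighting of
   profiles under which every conditional event has zero expected gain forces
   a profile with nonnegative gain ([balanced_witness]); such balanced
   families are built at both endpoints and mixed to reach every value in
   between, while bets not involving C(F_k) are won by a single profile. *)

From HB Require Import structures.
From mathcomp Require Import all_boot all_order all_algebra.
From mathcomp Require Import ring lra.
Import Order.TTheory GRing.Theory Num.Theory.
Local Open Scope ring_scope.
Set Implicit Arguments. Unset Strict Implicit.

Lemma indE (R : numDomainType) (b : bool) : ind R b = if b then 1 else 0.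
Proof. by case: b. Qed.

(* A profile is a pair (h, e) of truth values for the H_i and the E_i.
   qcC and qcH are the conditioned and conditioning events of C(F_k). *)
Definition qcC (k : nat) (h e : nat -> bool) : bool :=
  [forall i : 'I_k, e i || ~~ h i].
Definition qcH (k : nat) (h : nat -> bool) : bool := [exists i : 'I_k, h i].

Definition profA (k : nat) (h e : nat -> bool) (j : 'I_k.+1) : bool :=
  if (j < k)%N then e j else qcC k h e.
Definition profB (k : nat) (h : nat -> bool) (j : 'I_k.+1) : bool :=
  if (j < k)%N then h j else qcH k h.
Arguments profA : clear implicits.
Arguments profB : clear implicits.

Definition gain (R : realFieldType) (k : nat) (p : nat -> R) (z : R)
    (J : {set 'I_k.+1}) (s : 'I_k.+1 -> R) (h e : nat -> bool) : R :=
  \sum_(j in J) s j * ind R (profB k h j) * (ind R (profA k h e j) - extp k p z j).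
Arguments gain : clear implicits.
Arguments gain {R}.

Definition profile_coherent (R : realFieldType) (k : nat) (p : nat -> R) (z : R)
    : Prop :=
  forall (J : {set 'I_k.+1}) (s : 'I_k.+1 -> R), J != set0 ->
    exists h e, [exists j in J, profB k h j] /\ 0 <= gain k p z J s h e.
Arguments profile_coherent : clear implicits.
Arguments profile_coherent {R}.

Section Constituents.
Variables (Omega : finType) (n k : nat) (E H : nat -> pred Omega).

Lemma constituent_profile (w : Omega) (j : 'I_k.+1) :
  extA k E H j w = profA k (H^~ w) (E^~ w) j /\ extB k H j w = profB k (H^~ w) j.
Proof. by rewrite /extA /extB /profA /profB; case: ifP. Qed.

Lemma realize_profile (h e : nat -> bool) :
  logically_independent n E H -> (k <= n)%N ->
  exists w : Omega, forall j : 'I_k.+1,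
    extA k E H j w = profA k h e j /\ extB k H j w = profB k h j.
Proof.
move=> LI kn; have [w hw] := LI (fun i => e i) (fun i => h i).
have EH_w i : (i < k)%N -> E i w = e i /\ H i w = h i.
  by move=> ik; exact: (hw (Ordinal (leq_trans ik kn))).
exists w => j; rewrite /extA /extB /profA /profB; case: ifP => [jk|_].
  exact: EH_w.
split; [apply: eq_forallb | apply: eq_existsb] => i.
  by have [-> ->] := EH_w i (ltn_ord i).
by have [_ ->] := EH_w i (ltn_ord i).
Qed.

Lemma coherent_profileP (R : realFieldType) (p : nat -> R) (z : R) :
  logically_independent n E H -> (k <= n)%N ->
  coherent (extA k E H) (extB k H) (extp k p z) <-> profile_coherent k p z.
Proof.
move=> LI kn.
have transfer w h e (J : {set 'I_k.+1}) (s : 'I_k.+1 -> R) :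
    (forall j, extA k E H j w = profA k h e j /\ extB k H j w = profB k h j) ->
    [exists j in J, extB k H j w] = [exists j in J, profB k h j] /\
    \sum_(j in J) s j * ind R (extB k H j w) * (ind R (extA k E H j w) - extp k p z j)
      = gain k p z J s h e.
  move=> hw; split.
    by apply: eq_existsb => j; have [_ ->] := hw j.
  by apply: eq_bigr => j _; have [-> ->] := hw j.
split=> coh J s J0.
  have [w [hB hG]] := coh J s J0.
  have [eB eG] := transfer w _ _ J s (constituent_profile w).
  by exists (H^~ w), (E^~ w); rewrite -eB -eG.
have [h [e [hB hG]]] := coh J s J0.
have [w hw] := realize_profile h e LI kn.
by exists w; have [-> ->] := transfer w h e J s hw.
Qed.

End Constituents.

Section Necessity.
Variables (R : realFieldType) (k : nat) (p : nat -> R).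
Hypothesis p01 : forall i, (i < k)%N -> 0 <= p i <= 1.

Lemma gain_qc (z : R) (s : 'I_k.+1 -> R) (h e : nat -> bool) :
  gain k p z [set ord_max] s h e =
  s ord_max * ind R (qcH k h) * (ind R (qcC k h e) - z).
Proof. by rewrite /gain big_set1 /profA /profB /extp /= ltnn. Qed.

Lemma gain_setT (z : R) (s : 'I_k.+1 -> R) (h e : nat -> bool) :
  gain k p z [set: 'I_k.+1] s h e =
  \sum_(i < k) s (widen_ord (leqnSn k) i) * ind R (h i) * (ind R (e i) - p i) +
  s ord_max * ind R (qcH k h) * (ind R (qcC k h e) - z).
Proof.
rewrite /gain (eq_bigl xpredT) => [|j]; last by rewrite in_setT.
rewrite big_ord_recr /= /profA /profB /extp /= ltnn; congr (_ + _).
by apply: eq_bigr => i _; rewrite ltn_ord.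
Qed.

Lemma profile_coherent_qc (z : R) (J : {set 'I_k.+1}) (s : 'I_k.+1 -> R) :
  profile_coherent k p z -> J != set0 ->
  exists h e, qcH k h /\ 0 <= gain k p z J s h e.
Proof.
move=> coh J0; have [h [e [/existsP[j /andP[_ hj]] g]]] := coh J s J0.
exists h, e; split=> //; move: hj; rewrite /profB; case: ifP => // jk hj.
by apply/existsP; exists (Ordinal jk).
Qed.

(* Betting +-1 on C(F_k) alone: a coherent z is a probability. *)
Lemma coherent_z01 (z : R) : profile_coherent k p z -> 0 <= z <= 1.
Proof.
move=> coh; have J0 : [set (@ord_max k)] != set0.
  by apply/set0Pn; exists ord_max; rewrite in_set1.
have [h1 [e1 [H1 g1]]] := profile_coherent_qc (fun _ => -1) coh J0.
have [h2 [e2 [H2 g2]]] := profile_coherent_qc (fun _ => 1) coh J0.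
move: g1 g2; rewrite !gain_qc H1 H2 !indE.
by case: (qcC k h1 e1); case: (qcC k h2 e2) => *; apply/andP; split; lra.
Qed.

Lemma TL_complement : (0 < k)%N ->
  TL k p = Num.max (1 - \sum_(i < k) (1 - p i)) 0.
Proof.
move=> k0; rewrite /TL sumrB sumr_const card_ord natrB //; congr Num.max; ring.
Qed.

(* Betting one unit on every E_i | H_i against C(F_k) never wins more than
   Q - 1: if C(F_k) fails, some bet with H_i true and E_i false is lost. *)
Lemma sure_loss_bound (h e : nat -> bool) :
  \sum_(i < k) ind R (h i) * (ind R (e i) - p i) - ind R (qcC k h e)
    <= \sum_(i < k) (1 - p i) - 1.
Proof.
have term_le (i : 'I_k) : ind R (h i) * (ind R (e i) - p i) <= 1 - p i.
  by have := p01 (ltn_ord i); case: (h i); case: (e i); rewrite !indE; lra.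
case: (boolP (qcC k h e)) => [C|/forallPn[i0]].
  by rewrite indE lerB // ler_sum.
rewrite negb_or negbK => /andP[/negbTE ne0 hi0].
rewrite (bigD1 i0) //= [X in _ <= X - 1](bigD1 i0) //= ne0 hi0 !indE.
have : \sum_(i < k | i != i0) ind R (h i) * (ind R (e i) - p i)
       <= \sum_(i < k | i != i0) (1 - p i) by apply: ler_sum => i _.
lra.
Qed.

(* Unit stakes on each E_i | H_i against C(F_k) give the Lukasiewicz bound. *)
Lemma coherent_TL_le (z : R) : (0 < k)%N ->
  profile_coherent k p z -> TL k p <= z.
Proof.
move=> k0 coh; rewrite TL_complement // ge_max andbC.
have /andP[-> _] := coherent_z01 coh; rewrite /=.
have J0 : [set: 'I_k.+1] != set0 by apply/set0Pn; exists ord_max; rewrite in_setT.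
have [h [e [Hh g]]] :=
  profile_coherent_qc (fun j : 'I_k.+1 => if (j < k)%N then 1 else -1) coh J0.
rewrite gain_setT /= ltnn Hh
  (eq_bigr (fun i : 'I_k => ind R (h i) * (ind R (e i) - p i))) in g;
  last by move=> i _; rewrite ltn_ord mul1r.
have := sure_loss_bound h e; rewrite indE in g; lra.
Qed.

Lemma lt1_of_no_certain : ~~ [exists i : 'I_k, p i == 1] ->
  forall i, (i < k)%N -> 0 <= p i < 1.
Proof.
move=> none i ik; have /andP[-> le1] := p01 ik; rewrite lt_def le1 andbT.
by apply: contra none => /eqP p1; apply/existsP; exists (Ordinal ik); apply/eqP.
Qed.

Lemma hamacher_stakeE (q : R) (hi ei : bool) : q < 1 ->
  - (1 - q)^-1 * ind R hi * (ind R ei - q) =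
  if hi then (if ei then -1 else q / (1 - q)) else 0.
Proof.
move=> q1; have nz : 1 - q != 0 by rewrite subr_eq0 eq_sym lt_eqF.
by case: hi; case: ei; rewrite !indE //=; field.
Qed.

(* With S the sum of the odds, z > S/(S+1) makes the stakes -1/(1-p_i) on
   each E_i | H_i and S+1 on C(F_k) a sure loss. *)
Lemma coherent_le_SH0 (z : R) : profile_coherent k p z -> z <= SH0 k p.
Proof.
move=> coh; have /andP[_ z1] := coherent_z01 coh.
rewrite /SH0; case: ifPn => [//|/lt1_of_no_certain p_lt1].
set q := fun i => p i / (1 - p i); set S := \sum_(i < k) q i.
have q0 (i : 'I_k) : 0 <= q i.
  by have /andP[? ?] := p_lt1 i (ltn_ord i); apply: divr_ge0; lra.
have S0 : 0 <= S by apply: sumr_ge0.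
rewrite leNgt ltr_pdivrMr; last by lra.
apply/negP => hz.
have J0 : [set: 'I_k.+1] != set0 by apply/set0Pn; exists ord_max; rewrite in_setT.
have [h [e [Hh g]]] := profile_coherent_qc
  (fun j : 'I_k.+1 => if (j < k)%N then - (1 - p j)^-1 else S + 1) coh J0.
rewrite gain_setT /= ltnn Hh
  (eq_bigr (fun i : 'I_k => if h i then (if e i then -1 else q i) else 0)) in g;
  last by move=> i _; rewrite ltn_ord hamacher_stakeE //; have /andP[] := p_lt1 i (ltn_ord i).
case: (boolP (qcC k h e)) => [C|nC]; rewrite !indE /= ?(negbTE nC) ?C mulr1 in g.
  have /existsP[i0 hi0] := Hh.
  have ei0 : e i0 by move: C => /forallP /(_ i0); rewrite hi0 orbF.
  rewrite (bigD1 i0) //= hi0 ei0 in g.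
  have : \sum_(i < k | i != i0) (if h i then (if e i then -1 else q i) else 0) <= 0.
    apply: sumr_le0 => i _; move: C => /forallP /(_ i).
    by case: (h i); case: (e i); rewrite ?lerN10.
  lra.
have : \sum_(i < k) (if h i then (if e i then -1 else q i) else 0) <= S.
  apply: ler_sum => i _; case: (h i); case: (e i); rewrite ?q0 //.
  by apply: le_trans (q0 i); rewrite lerN10.
lra.
Qed.

End Necessity.

Lemma has_nonneg_of_mean0 (R : realDomainType) (T : Type) (r : seq T)
    (w g : T -> R) :
  all (fun x => 0 <= w x) r -> 0 < \sum_(x <- r) w x ->
  \sum_(x <- r) w x * g x = 0 -> has (fun x => 0 <= g x) r.
Proof.
rewrite !(big_tnth _ _ r) => /(all_tnthP (t := in_tuple r)) w0 m0 s0.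
apply/(has_tnthP (t := in_tuple r)).
set x := tnth (in_tuple r) in w0 m0 s0 *.
have [/existsP //|] := boolP [exists i, 0 <= g (x i)].
rewrite negb_exists => /forallP gneg.
have wg0 i : w (x i) * g (x i) = 0.
  apply/eqP; rewrite -oppr_eq0; apply/eqP; move: i isT; apply: psumr_eq0P.
    by move=> i _; rewrite oppr_ge0 mulr_ge0_le0 // ltW // ltNge gneg.
  by rewrite sumrN s0 oppr0.
suff : \sum_i w (x i) = 0 by move=> e0; rewrite e0 ltxx in m0.
apply: big1 => i _; have /eqP := wg0 i.
by rewrite mulf_eq0 => /orP[/eqP //|/eqP gi]; have := gneg i; rewrite gi lexx.
Qed.

Lemma eq_big_all (V : nmodType) (T : Type) (a : pred T) (r : seq T) (F G : T -> V) :
  all a r -> (forall x, a x -> F x = G x) ->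
  \sum_(x <- r) F x = \sum_(x <- r) G x.
Proof.
move=> ar FG; rewrite !(big_tnth _ _ r); apply: eq_bigr => i _; apply: FG.
by move: ar => /(all_tnthP (t := in_tuple r)).
Qed.

Section Balanced.
Variables (R : realFieldType) (k : nat) (p : nat -> R).
Local Notation family := (seq (R * (nat -> bool) * (nat -> bool))).

(* A family is a finite list of weighted profiles (weight, h, e). *)
Definition mass (L : family) : R := \sum_(x <- L) x.1.1.
Definition wsum (L : family) (F : (nat -> bool) -> (nat -> bool) -> R) : R :=
  \sum_(x <- L) x.1.1 * F x.1.2 x.2.
Definition scale (c : R) (L : family) : family :=
  [seq (c * x.1.1, x.1.2, x.2) | x <- L].

Definition balanced (z : R) (L : family) : Prop :=
  [/\ all (fun x => (0 <= x.1.1) && qcH k x.1.2) L,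
      forall j, (j < k)%N -> wsum L (fun h e => ind R (h j) * (ind R (e j) - p j)) = 0,
      wsum L (fun h e => ind R (qcC k h e)) = z * mass L &
      0 < mass L].

Lemma wsum_scale c L F : wsum (scale c L) F = c * wsum L F.
Proof. by rewrite /wsum big_map mulr_sumr; apply: eq_bigr => x _; rewrite mulrA. Qed.

Lemma mass_scale c L : mass (scale c L) = c * mass L.
Proof. by rewrite /mass big_map mulr_sumr. Qed.

Lemma wsum_cons x L F : wsum (x :: L) F = x.1.1 * F x.1.2 x.2 + wsum L F.
Proof. by rewrite /wsum big_cons. Qed.

Lemma mass_cons x L : mass (x :: L) = x.1.1 + mass L.
Proof. by rewrite /mass big_cons. Qed.

Lemma wsum_cat L L' F : wsum (L ++ L') F = wsum L F + wsum L' F.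
Proof. by rewrite /wsum big_cat. Qed.

Lemma mass_cat L L' : mass (L ++ L') = mass L + mass L'.
Proof. by rewrite /mass big_cat. Qed.

Lemma balanced_mix z1 z2 L1 L2 t :
  balanced z1 L1 -> balanced z2 L2 -> 0 <= t <= 1 ->
  balanced (t * z1 + (1 - t) * z2)
    (scale (t / mass L1) L1 ++ scale ((1 - t) / mass L2) L2).
Proof.
move=> [a1 b1 c1 m1] [a2 b2 c2 m2] /andP[t0 t1]; split.
- rewrite all_cat !all_map; apply/andP; split.
    apply: sub_all a1 => x /andP[w0 hx] /=; rewrite hx andbT.
    by rewrite mulr_ge0 // divr_ge0 // ltW.
  apply: sub_all a2 => x /andP[w0 hx] /=; rewrite hx andbT.
  by rewrite mulr_ge0 // divr_ge0 ?subr_ge0 // ltW.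
- by move=> j jk; rewrite wsum_cat !wsum_scale b1 // b2 // !mulr0 addr0.
- rewrite wsum_cat mass_cat !wsum_scale !mass_scale c1 c2.
  by field; rewrite !gt_eqF.
- rewrite mass_cat !mass_scale !mulfVK ?gt_eqF //; lra.
Qed.

Lemma balanced_expected_gain z L (J : {set 'I_k.+1}) s :
  balanced z L -> wsum L (gain k p z J s) = 0.
Proof.
move=> [supp bal qc _]; rewrite /wsum /gain.
under eq_bigr do rewrite mulr_sumr.
rewrite exchange_big /=; apply: big1 => j _.
under eq_bigr do rewrite -!mulrA mulrCA.
rewrite -mulr_sumr /profA /profB /extp; case: ifP => jk.
  by have := bal _ jk; rewrite /wsum => ->; rewrite mulr0.
rewrite (eq_big_all (a := fun x => (0 <= x.1.1) && qcH k x.1.2)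
  (G := fun x => x.1.1 * ind R (qcC k x.1.2 x.2) - z * x.1.1)) //.
  by move: qc; rewrite sumrB -mulr_sumr /wsum /mass => ->; rewrite subrr mulr0.
by move=> x /andP[_ ->]; rewrite indE mul1r mulrBr [z * _]mulrC.
Qed.

Lemma balanced_witness z L (J : {set 'I_k.+1}) s :
  balanced z L -> ord_max \in J ->
  exists h e, [exists j in J, profB k h j] /\ 0 <= gain k p z J s h e.
Proof.
move=> bL qcJ; have [supp _ _ m0] := bL.
have w0 : all (fun x => 0 <= x.1.1) L by apply: sub_all supp => x /andP[].
have /(has_tnthP (t := in_tuple L))[i gi] :=
  has_nonneg_of_mean0 w0 m0 (balanced_expected_gain J s bL).
have /(all_tnthP (t := in_tuple L))/(_ i)/andP[_ Hi] := supp.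
exists (tnth (in_tuple L) i).1.2, (tnth (in_tuple L) i).2; split=> //.
by apply/existsP; exists ord_max; rewrite qcJ /profB ltnn.
Qed.

End Balanced.

Section Constructions.
Variables (R : realFieldType) (k : nat) (p : nat -> R).
Hypotheses (k_gt0 : (0 < k)%N) (p01 : forall i, (i < k)%N -> 0 <= p i <= 1).

Local Notation only i := (fun l : nat => l == i).
Local Notation everywhere := (fun _ : nat => true).
Local Notation nowhere := (fun _ : nat => false).

Lemma sum_only (j : nat) (F : nat -> R) : (j < k)%N ->
  \sum_(i < k) ind R (j == i) * F i = F j.
Proof.
move=> jk; rewrite (bigD1 (Ordinal jk)) //= eqxx indE mul1r big1 ?addr0 // => i ne.
by rewrite indE ifN ?mul0r //; apply: contra ne => /eqP eji; apply/eqP/val_inj.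
Qed.

Lemma qcC_fail (h e : nat -> bool) (i : nat) :
  (i < k)%N -> h i -> ~~ e i -> qcC k h e = false.
Proof.
move=> ik hi ei; apply/negbTE/forallPn; exists (Ordinal ik).
by rewrite /= hi (negbTE ei).
Qed.

Lemma qcH_only (i : nat) : (i < k)%N -> qcH k (only i).
Proof. by move=> ik; apply/existsP; exists (Ordinal ik) => /=. Qed.

Lemma qcH_everywhere : qcH k everywhere.
Proof. by apply/existsP; exists (Ordinal k_gt0). Qed.

Lemma qcC_only (i : nat) : qcC k (only i) (only i) = true.
Proof. by apply/forallP => l /=; case: (_ == _). Qed.

Lemma balanced_single (i : nat) (e : nat -> bool) : (i < k)%N -> p i = ind R (e i) ->
  balanced k p (ind R (qcC k (only i) e)) [:: (1, only i, e)].
Proof.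
move=> ik pi; rewrite /balanced /wsum /mass !big_seq1 /= ler01 qcH_only //.
split=> // [j jk|]; last by rewrite mul1r mulr1.
by rewrite big_seq1 /= mul1r indE; case: eqP => [->|_]; rewrite ?pi ?subrr ?mulr0 ?mul0r.
Qed.

(* Upper bound S_0^H: if some p_i = 1, the certain profile for i; otherwise
   the profile where every H_i is true and every E_i false, with weight 1,
   together with, for each i, the profile where only H_i and E_i are true,
   weighted by the odds p_i / (1 - p_i). *)
Lemma balanced_SH0 : exists L, balanced k p (SH0 k p) L.
Proof.
rewrite /SH0; case: ifPn => [/existsP[i0 /eqP pi0]|/(lt1_of_no_certain p01) p_lt1].
  exists [:: (1, only i0, only i0)].
  by have := balanced_single (ltn_ord i0) (e := only i0); rewrite qcC_only eqxx; apply.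
set q := fun i => p i / (1 - p i); set S := \sum_(i < k) q i.
have q0 (i : 'I_k) : 0 <= q i.
  by have /andP[? ?] := p_lt1 i (ltn_ord i); apply: divr_ge0; lra.
have S0 : 0 <= S by apply: sumr_ge0.
exists ((1, everywhere, nowhere) :: [seq (q i, only i, only i) | i : 'I_k <- index_enum 'I_k]).
rewrite /balanced /wsum /mass !big_cons !big_map /= ler01 qcH_everywhere all_map.
rewrite (qcC_fail (h := everywhere) (e := nowhere) k_gt0) //.
split.
- by apply/allP => i _ /=; rewrite q0 qcH_only.
- move=> j jk; rewrite big_cons big_map /= !indE mul1r sub0r.
  rewrite (eq_bigr (fun i : 'I_k => ind R (j == nat_of_ord i) * (q i * (1 - p i)))); last first.
    by move=> i _; case: eqP => [->|_]; rewrite !indE ?eqxx /=; ring.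
  rewrite (sum_only (fun i => q i * (1 - p i)) jk) /q mulfVK.
    by rewrite mul1r addNr.
  by rewrite subr_eq0 eq_sym lt_eqF //; have /andP[] := p_lt1 j jk.
- rewrite (eq_bigr (fun i : 'I_k => q i)) => [|i _]; last by rewrite qcC_only indE mulr1.
  by rewrite indE mulr0 add0r -/S addrC; field; rewrite gt_eqF //; lra.
- by apply: lt_le_trans ltr01 _; rewrite lerDl.
Qed.

Local Notation Q := (\sum_(i < k) (1 - p i)).
Local Notation one_failure :=
  [seq (1 - p i, everywhere, fun l : nat => l != i) | i : 'I_k <- index_enum 'I_k].

(* Under one_failure, E_j has weight Q - (1 - p_j) out of Q, so it is off
   balance by (Q - 1)(1 - p_j); the quasi conjunction never holds. *)
Lemma one_failure_balance (j : nat) : (j < k)%N ->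
  wsum one_failure (fun h e => ind R (h j) * (ind R (e j) - p j)) = (Q - 1) * (1 - p j).
Proof.
move=> jk; rewrite /wsum big_map.
rewrite (eq_bigr (fun i : 'I_k => (1 - p i) * (1 - p j) - ind R (j == i) * (1 - p i))).
  by rewrite sumrB -mulr_suml (sum_only (fun i => 1 - p i) jk); ring.
by move=> i _ /=; rewrite !indE; case: (j == i) => /=; ring.
Qed.

Lemma one_failure_qc : wsum one_failure (fun h e => ind R (qcC k h e)) = 0.
Proof.
rewrite /wsum big_map big1 // => i _ /=.
by rewrite (qcC_fail (h := everywhere) (e := fun l => l != i) (ltn_ord i)) ?eqxx // mulr0.
Qed.

Lemma one_failure_mass : mass one_failure = Q.
Proof. by rewrite /mass big_map. Qed.

Lemma one_failure_support :
  all (fun x => (0 <= x.1.1) && qcH k x.1.2) one_failure.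
Proof.
rewrite all_map; apply/allP => i _ /=; rewrite qcH_everywhere andbT subr_ge0.
by have /andP[] := p01 (ltn_ord i).
Qed.

(* When Q <= 1, adding the profile where everything is true, with weight
   1 - Q, restores the balance and gives C(F_k) the frequency 1 - Q. *)
Lemma balanced_frechet : Q <= 1 -> balanced k p (1 - Q)
  ((1 - Q, everywhere, everywhere) :: one_failure).
Proof.
move=> Q1; split.
- by rewrite /= subr_ge0 Q1 qcH_everywhere one_failure_support.
- move=> j jk; rewrite wsum_cons one_failure_balance // !indE /=; ring.
- rewrite wsum_cons one_failure_qc mass_cons one_failure_mass /=.
  have -> : qcC k everywhere everywhere by apply/forallP.
  by rewrite indE; ring.
- by rewrite mass_cons one_failure_mass subrK ltr01.
Qed.

(* When Q >= 1 and every p_i > 0, restore the balance of each E_i with the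
   profile where H_i alone is true and E_i is false, of weight
   (1 - p_i)(Q - 1)/p_i: the quasi conjunction then has weight 0. *)
Lemma balanced_disjoint : 1 <= Q -> (forall i, (i < k)%N -> 0 < p i) ->
  balanced k p 0 (one_failure ++
    [seq ((1 - p i) * (Q - 1) / p i, only i, nowhere) | i : 'I_k <- index_enum 'I_k]).
Proof.
move=> Q1 p_gt0.
have w0 (i : 'I_k) : 0 <= (1 - p i) * (Q - 1) / p i.
  have /andP[_ pi1] := p01 (ltn_ord i).
  by rewrite divr_ge0 ?mulr_ge0 ?subr_ge0 // ltW // p_gt0.
have C0 (i : 'I_k) : qcC k (only i) nowhere = false by apply: qcC_fail (ltn_ord i) _ _.
split.
- rewrite all_cat one_failure_support all_map /=.
  by apply/allP => i _ /=; rewrite w0 qcH_only.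
- move=> j jk; rewrite wsum_cat one_failure_balance // /wsum big_map /=.
  rewrite [X in _ + X = _](eq_bigr (fun i : 'I_k =>
    ind R (j == i) * ((1 - p i) * (Q - 1) / p i * - p i))).
    rewrite (sum_only (fun i => (1 - p i) * (Q - 1) / p i * - p i) jk).
    by field; rewrite gt_eqF // p_gt0.
  by move=> i _; case: eqP => [->|_]; rewrite !indE /=; ring.
- rewrite wsum_cat one_failure_qc /wsum big_map big1 ?addr0 ?mul0r // => i _ /=.
  by rewrite C0 indE mulr0.
- rewrite mass_cat one_failure_mass /mass big_map /=.
  by apply: lt_le_trans ltr01 _; rewrite (le_trans Q1) // lerDl sumr_ge0.
Qed.

(* Lower bound T_L = max(1 - Q, 0): by [balanced_frechet] when Q <= 1, and
   otherwise by a certain-failure profile or by [balanced_disjoint]. *)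
Lemma balanced_TL : exists L, balanced k p (TL k p) L.
Proof.
rewrite TL_complement //; have [Q1|Q1] := leP Q 1.
  have -> : Num.max (1 - Q) 0 = 1 - Q by apply/max_idPl; rewrite subr_ge0.
  by eexists; apply: balanced_frechet.
have -> : Num.max (1 - Q) 0 = 0 by apply/max_idPr; rewrite subr_le0 ltW.
have [/existsP[j0 /eqP pj0]|no_zero] := boolP [exists i : 'I_k, p i == 0].
  exists [:: (1, only j0, nowhere)].
  have := balanced_single (ltn_ord j0) (e := nowhere).
  by rewrite (qcC_fail (ltn_ord j0)) ?eqxx // indE pj0 /=; apply.
eexists; apply: balanced_disjoint (ltW Q1) _ => i ik.
have /andP[p0 _] := p01 ik; rewrite lt_def p0 andbT.
by apply: contra no_zero => /eqP pi0; apply/existsP; exists (Ordinal ik); apply/eqP.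
Qed.

(* Mixing the two extreme families gives every value in between. *)
Lemma balanced_between (z : R) : TL k p <= z <= SH0 k p -> exists L, balanced k p z L.
Proof.
move=> /andP[lz zu]; have [Ll bl] := balanced_TL; have [Lu bu] := balanced_SH0.
have [eq_lu|ne_lu] := eqVneq (TL k p) (SH0 k p).
  by exists Ll; have -> : z = TL k p by apply/eqP; rewrite eq_le lz eq_lu zu.
set l := TL k p in lz bl ne_lu *; set u := SH0 k p in zu bu ne_lu *.
have nz : u - l != 0 by rewrite subr_eq0 eq_sym.
have lu : l < u by rewrite lt_def eq_sym ne_lu (le_trans lz zu).
set t := (u - z) / (u - l).
have t01 : 0 <= t <= 1.
  by apply/andP; split; [apply: divr_ge0 | rewrite ler_pdivrMr]; lra.
have -> : z = t * l + (1 - t) * u by rewrite /t; field.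
by eexists; apply: balanced_mix bl bu t01.
Qed.

End Constructions.

Section Completeness.
Variables (R : realFieldType) (k : nat) (p : nat -> R).
Hypothesis p01 : forall i, (i < k)%N -> 0 <= p i <= 1.

(* Bets not involving the quasi conjunction: a single conditional event
   E_j | H_j is won or lost according to the sign of its stake. *)
Lemma nonneg_gain_off_qc (z : R) (J : {set 'I_k.+1}) (s : 'I_k.+1 -> R) :
  ord_max \notin J -> J != set0 ->
  exists h e, [exists j in J, profB k h j] /\ 0 <= gain k p z J s h e.
Proof.
move=> qcJ /set0Pn[j0 j0J].
have below (j : 'I_k.+1) : j \in J -> (j < k)%N.
  move=> jJ; rewrite ltn_neqAle -ltnS ltn_ord andbT.
  by apply: contra qcJ => /eqP jk; rewrite (_ : ord_max = j) //; apply: val_inj.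
set h := fun l : nat => l == j0.
set e := fun l : nat => (l == j0) && (0 <= s j0).
exists h, e; split.
  by apply/existsP; exists j0; rewrite j0J /profB below // /h eqxx.
rewrite /gain (bigD1 j0) //= big1 ?addr0 => [|j /andP[jJ ne]]; last first.
  rewrite /profB below // /h.
  have /negbTE -> : nat_of_ord j != j0 by apply: contra ne => /eqP /val_inj ->.
  by rewrite indE mulr0 mul0r.
rewrite /profA /profB /extp below // /h /e eqxx indE mulr1 indE /=.
have /andP[p0 p1] := p01 (below _ j0J).
by case: ifPn => [s0|/negP s0]; nra.
Qed.

Lemma profile_coherent_between (z : R) : (0 < k)%N ->
  TL k p <= z <= SH0 k p -> profile_coherent k p z.
Proof.
move=> k0 bounds J s J0; case: (boolP (ord_max \in J)) => qcJ.
  have [L bL] := balanced_between k0 p01 bounds.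
  exact: balanced_witness bL qcJ.
exact: nonneg_gain_off_qc.
Qed.

End Completeness.

Theorem theorem5 (R : realFieldType) (Omega : finType) (n : nat)
  (E H : nat -> pred Omega) (p : nat -> R) :
  logically_independent n E H ->
  (forall i, (i < n)%N -> 0 <= p i <= 1) ->
  forall k, (2 <= k <= n)%N ->
  forall z : R,
    coherent (extA k E H) (extB k H) (extp k p z) <->
    TL k p <= z <= SH0 k p.
Proof.
move=> LI p01n k /andP[k2 kn] z.
have k0 : (0 < k)%N by apply: leq_trans k2.
have p01 i : (i < k)%N -> 0 <= p i <= 1 by move=> ik; apply: p01n (leq_trans ik kn).
rewrite coherent_profileP //; split=> [coh|].
  by rewrite coherent_TL_le // coherent_le_SH0.
exact: profile_coherent_between.
Qed.
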